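(* Let $Q$ be a quiver such that every path of $Q$ belongs to $\mathcal{A}$, i.e. for any two vertices there is at most one path from one to the other. Then every two-sided algebra ideal $I$ of the path algebra $\Bbbk Q$ is a linearized semigroup ideal, i.e. $I$ is the linear span of a set $X$ of paths such that $\alpha\omega\beta\in X$ whenever $\omega\in X$, $\alpha,\beta$ are paths and the concatenation $\alpha\omega\beta$ is defined (non-zero).
   Context: $\Bbbk$ is an algebraically closed field. Paths include trivial paths $\varepsilon_x$ at vertices; the product of two paths in $\Bbbk Q$ is their concatenation when defined and $0$ otherwise; paths form a basis of $\Bbbk Q$. $\mathcal{A}$ is the set of paths $\omega$ such that no other path has the same head and the same tail as $\omega$. (Equivalently, in semigroup language: $I=\Bbbk\hat I/\Bbbk\mathbf{0}$ for a semigroup ideal $\hat I$ of the path semigroup with zero $\mathbf{0}$.) *)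

From HB Require Import structures.
From Stdlib Require Lists.List.
From mathcomp Require Import all_boot all_order all_algebra.
Set Implicit Arguments. Unset Strict Implicit. Unset Printing Implicit Defensive.
Import GRing.Theory.
Local Open Scope ring_scope.

(* A (raw) path is a pair (x, l): a starting vertex x and a list of arrows
   l = [e1; ...; en] (composed left to right: e1 first).  The trivial path
   at x is (x, [::]). *)
Section Quiver.
Variables (V E : Type) (src tgt : E -> V).

Fixpoint is_path_from (x : V) (l : seq E) : Prop :=
  match l with
  | [::] => True
  | e :: l' => src e = x /\ is_path_from (tgt e) l'
  end.

Definition is_path (p : V * seq E) : Prop := is_path_from p.1 p.2.

Fixpoint endpt (x : V) (l : seq E) : V :=
  match l with
  | [::] => x
  | e :: l' => endpt (tgt e) l'
  end.

Definition path_start (p : V * seq E) : V := p.1.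
Definition path_end (p : V * seq E) : V := endpt p.1 p.2.

(* concatenation of p followed by q (only meaningful when path_end p = path_start q) *)
Definition pconcat (p q : V * seq E) : V * seq E := (p.1, p.2 ++ q.2).

Definition all_paths_in_A : Prop :=
  forall p q, is_path p -> is_path q ->
    path_start p = path_start q -> path_end p = path_end q -> p = q.

Variable K : nzRingType.

(* Elements of the path algebra K Q: finitely supported K-valued functions
   on paths (coefficient vectors in the basis of paths). *)
Definition inKQ (f : V * seq E -> K) : Prop :=
  (forall p, f p != 0 -> is_path p) /\
  exists s : seq (V * seq E), forall p, f p != 0 -> Stdlib.Lists.List.In p s.

Definition kq_add (f g : V * seq E -> K) : V * seq E -> K := fun p => f p + g p.
Definition kq_scale (c : K) (f : V * seq E -> K) : V * seq E -> K := fun p => c * f p.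
Definition kq_zero : V * seq E -> K := fun _ => 0.

(* Multiplication in K Q, extending bilinearly the product of paths
   (concatenation when defined, 0 otherwise): the coefficient of a path
   (x, l) in f * g is the sum over all factorisations (x, l) = a b. *)
Definition kq_mul (f g : V * seq E -> K) : V * seq E -> K :=
  fun p => \sum_(i < (size p.2).+1)
             f (p.1, take i p.2) * g (endpt p.1 (take i p.2), drop i p.2).

Definition is_kq_ideal (I : (V * seq E -> K) -> Prop) : Prop :=
  (forall f, I f -> inKQ f) /\
  I kq_zero /\
  (forall f g, I f -> I g -> I (kq_add f g)) /\
  (forall c f, I f -> I (kq_scale c f)) /\
  (forall f g, I f -> inKQ g -> I (kq_mul g f)) /\
  (forall f g, I f -> inKQ g -> I (kq_mul f g)).

Definition linearized_semigroup_ideal (I : (V * seq E -> K) -> Prop) : Prop :=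
  exists X : V * seq E -> Prop,
    (forall w, X w -> is_path w) /\
    (forall w a b, X w -> is_path a -> is_path b ->
        path_end a = path_start w -> path_end w = path_start b ->
        X (pconcat (pconcat a w) b)) /\
    (forall f, I f <-> (inKQ f /\ forall p, f p != 0 -> X p)).

End Quiver.

From mathcomp Require Import all_boot all_order all_algebra.
From mathcomp Require Import zify.
From Stdlib Require Import Classical ClassicalEpsilon FunctionalExtensionality.
Set Implicit Arguments. Unset Strict Implicit. Unset Printing Implicit Defensive.
Import GRing.Theory.
Local Open Scope ring_scope.

(* Multiplying [f] on both sides by the trivial paths at the start and at the
   end of a path [p] keeps exactly the coefficients of [f] on the paths from
   [path_start p] to [path_end p].  When [p] is the only such path, this
   corner of [f] is [f p] times [p], so [p] lies in every ideal containing an [f]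
   with [f p != 0].  An ideal is therefore spanned by the paths it contains,
   and these are closed under multiplication by paths on both sides. *)

Section PathAlgebra.
Variables (V E : Type) (src tgt : E -> V).

Lemma endpt_cat x l1 l2 : endpt tgt x (l1 ++ l2) = endpt tgt (endpt tgt x l1) l2.
Proof. by elim: l1 x => //= e l IH x. Qed.

Lemma is_path_from_cat x l1 l2 :
  is_path_from src tgt x l1 -> is_path_from src tgt (endpt tgt x l1) l2 ->
  is_path_from src tgt x (l1 ++ l2).
Proof. by elim: l1 x => //= e l IH x [? ?] ?; split => //; apply: IH. Qed.

Lemma is_path_pconcat p q : is_path src tgt p -> is_path src tgt q ->
  path_end tgt p = path_start q -> is_path src tgt (pconcat p q).
Proof.
case: p q => x l [y r] Pp Pq; rewrite /path_end /= => Hpq.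
by apply: is_path_from_cat; rewrite ?Hpq.
Qed.

Lemma path_end_pconcat p q : path_end tgt p = path_start q ->
  path_end tgt (pconcat p q) = path_end tgt q.
Proof.
by case: p q => x l [y r]; rewrite /path_end /= => Hpq; rewrite endpt_cat Hpq.
Qed.

Section Basis.
Variable K : nzRingType.

Definition kq_basis (p : V * seq E) : V * seq E -> K :=
  fun q => if excluded_middle_informative (q = p) then 1 else 0.

Lemma kq_basis_eq p : kq_basis p p = 1.
Proof. by rewrite /kq_basis; case: excluded_middle_informative. Qed.

Lemma kq_basis_neq p q : q <> p -> kq_basis p q = 0.
Proof. by rewrite /kq_basis; case: excluded_middle_informative. Qed.

Lemma kq_basis_KQ p : is_path src tgt p -> inKQ src tgt (kq_basis p).
Proof.
move=> Pp; split; last exists [:: p].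
all: move=> q; case: (excluded_middle_informative (q = p)) => [-> _ | ne].
all: first [done | by left | by rewrite kq_basis_neq ?eqxx].
Qed.

Lemma kq_mul_basis_l a h q : path_end tgt a = path_start q ->
  kq_mul tgt (kq_basis a) h (pconcat a q) = h q.
Proof.
case: a q => x l [y r] /= Hend; rewrite /kq_mul /=.
have lt_l : (size l < (size (l ++ r)).+1)%N by rewrite size_cat; lia.
rewrite (bigD1 (Ordinal lt_l)) //= take_size_cat // drop_size_cat //.
rewrite kq_basis_eq mul1r [endpt _ _ _]Hend big1 ?addr0 // => i /eqP ne.
rewrite kq_basis_neq ?mul0r // => -[eq_take]; apply: ne; apply: val_inj => /=.
have le_i : (i <= size (l ++ r))%N by rewrite -ltnS.
by have := congr1 size eq_take; rewrite size_takel.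
Qed.

Lemma kq_mul_basis_r h p b : path_end tgt p = path_start b ->
  kq_mul tgt h (kq_basis b) (pconcat p b) = h p.
Proof.
case: p b => x l [y r] /= Hend; rewrite /kq_mul /=.
have lt_l : (size l < (size (l ++ r)).+1)%N by rewrite size_cat; lia.
rewrite (bigD1 (Ordinal lt_l)) //= take_size_cat // drop_size_cat //.
rewrite [endpt _ _ _]Hend kq_basis_eq mulr1 big1 ?addr0 // => i /eqP ne.
rewrite kq_basis_neq ?mulr0 // => -[_ eq_drop]; apply: ne; apply: val_inj => /=.
have le_i : (i <= size (l ++ r))%N by rewrite -ltnS.
have := congr1 size eq_drop; rewrite size_drop; have := size_cat l r; lia.
Qed.

Lemma kq_mul_basis_l_eq0 a h q : path_start a <> path_start q ->
  kq_mul tgt (kq_basis a) h q = 0.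
Proof.
move=> ne; rewrite /kq_mul big1 // => i _.
by rewrite kq_basis_neq ?mul0r // => eq_a; apply: ne; rewrite -eq_a.
Qed.

Lemma kq_mul_basis_r_eq0 h b q : path_end tgt b <> path_end tgt q ->
  kq_mul tgt h (kq_basis b) q = 0.
Proof.
move=> ne; rewrite /kq_mul big1 // => i _.
rewrite kq_basis_neq ?mulr0 // => eq_b; apply: ne.
by rewrite -eq_b /path_end -endpt_cat cat_take_drop.
Qed.

Definition kq_corner (x y : V) (f : V * seq E -> K) : V * seq E -> K :=
  kq_mul tgt (kq_mul tgt (kq_basis (x, [::])) f) (kq_basis (y, [::])).

Lemma kq_corner_in x y f q : path_start q = x -> path_end tgt q = y ->
  kq_corner x y f q = f q.
Proof.
case: q => z l /= <- <-; rewrite /kq_corner.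
have := kq_mul_basis_r (kq_mul tgt (kq_basis (z, [::])) f) (p := (z, l))
  (b := (endpt tgt z l, [::])) erefl.
rewrite /pconcat /= cats0 => ->.
exact: (kq_mul_basis_l (a := (z, [::])) f (q := (z, l))).
Qed.

Lemma kq_corner_out x y f q : ~ (path_start q = x /\ path_end tgt q = y) ->
  kq_corner x y f q = 0.
Proof.
move=> out; case: (classic (path_start q = x)) => [start_q | ne].
  by rewrite /kq_corner kq_mul_basis_r_eq0 // => end_q; apply: out.
rewrite /kq_corner {1}/kq_mul big1 // => i _.
by rewrite kq_mul_basis_l_eq0 ?mul0r // => /esym.
Qed.

Lemma kq_corner_unique_path f p : all_paths_in_A src tgt ->
  (forall q, f q != 0 -> is_path src tgt q) -> is_path src tgt p ->
  kq_corner (path_start p) (path_end tgt p) f = kq_scale (f p) (kq_basis p).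
Proof.
move=> uniq_paths f_paths Pp; apply: functional_extensionality => q.
rewrite /kq_scale; case: (excluded_middle_informative (q = p)) => [-> | ne].
  by rewrite kq_corner_in // kq_basis_eq mulr1.
rewrite kq_basis_neq // mulr0.
case: (classic (path_start q = path_start p /\ path_end tgt q = path_end tgt p))
  => [[start_q end_q] | out]; last exact: kq_corner_out.
rewrite kq_corner_in //; case: (eqVneq (f q) 0) => // /f_paths Pq.
by case: ne; apply: uniq_paths.
Qed.

Variable I : (V * seq E -> K) -> Prop.
Hypothesis ideal_I : is_kq_ideal src tgt I.

Lemma kq_ideal_span f : inKQ src tgt f ->
  (forall p, f p != 0 -> I (kq_basis p)) -> I f.
Proof.
have [_ [I0 [Iadd [Iscale _]]]] := ideal_I.
case=> _ [s]; elim: s f => [|p s IH] f f_supp f_basis.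
  have -> : f = kq_zero K; last exact: I0.
  by apply: functional_extensionality => q; case: (eqVneq (f q) 0) => // /f_supp.
pose f' q := if excluded_middle_informative (q = p) then 0 else f q.
have f'_p : f' p = 0 by rewrite /f'; case: excluded_middle_informative.
have f'_q q : q <> p -> f' q = f q.
  by rewrite /f'; case: excluded_middle_informative.
have -> : f = kq_add (kq_scale (f p) (kq_basis p)) f'.
  apply: functional_extensionality => q; rewrite /kq_add /kq_scale.
  case: (excluded_middle_informative (q = p)) => [-> | ne].
    by rewrite f'_p kq_basis_eq mulr1 addr0.
  by rewrite f'_q // kq_basis_neq // mulr0 add0r.
apply: Iadd.
  case: (eqVneq (f p) 0) => [fp0 | /f_basis]; last exact: Iscale.
  have -> : kq_scale (f p) (kq_basis p) = kq_zero K; last exact: I0.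
  by apply: functional_extensionality => q; rewrite /kq_scale fp0 mul0r.
apply: IH => q; case: (excluded_middle_informative (q = p)) => [-> | ne].
- by rewrite f'_p eqxx.
- by rewrite f'_q // => /f_supp [/esym/ne | ].
- by rewrite f'_p eqxx.
- by rewrite f'_q // => /f_basis.
Qed.

End Basis.

Arguments kq_basis {K} p.

Section Ideal.
Variables (K : fieldType) (I : (V * seq E -> K) -> Prop).
Hypothesis ideal_I : is_kq_ideal src tgt I.
Hypothesis uniq_paths : all_paths_in_A src tgt.

Lemma kq_ideal_basis f p : I f -> f p != 0 -> I (kq_basis p).
Proof.
have [I_KQ [_ [_ [Iscale [Imull Imulr]]]]] := ideal_I.
move=> If fp; have [f_paths _] := I_KQ f If; have Pp := f_paths p fp.
have Icorner : I (kq_corner (path_start p) (path_end tgt p) f).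
  by apply: Imulr; [apply: Imull => // | ]; exact: kq_basis_KQ.
have -> : kq_basis p =
    kq_scale (f p)^-1 (kq_corner (path_start p) (path_end tgt p) f).
  rewrite kq_corner_unique_path //; apply: functional_extensionality => q.
  by rewrite /kq_scale mulrA mulVf ?mul1r.
exact: Iscale.
Qed.

Lemma kq_ideal_basis_pconcat w a b : I (kq_basis w) ->
  is_path src tgt a -> is_path src tgt b ->
  path_end tgt a = path_start w -> path_end tgt w = path_start b ->
  I (kq_basis (pconcat (pconcat a w) b)).
Proof.
have [_ [_ [_ [_ [Imull Imulr]]]]] := ideal_I.
move=> Iw Pa Pb aw wb.
apply: (@kq_ideal_basis
  (kq_mul tgt (kq_mul tgt (kq_basis a) (kq_basis w)) (kq_basis b))).
  by apply: Imulr; [apply: Imull => // | ]; exact: kq_basis_KQ.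
rewrite kq_mul_basis_r ?path_end_pconcat // kq_mul_basis_l //.
by rewrite kq_basis_eq oner_neq0.
Qed.

End Ideal.

End PathAlgebra.

Arguments kq_basis {V E K} p.

Theorem proposition2 (k : closedFieldType) (V E : Type) (src tgt : E -> V) :
  all_paths_in_A src tgt ->
  forall I : (V * seq E -> k) -> Prop,
    is_kq_ideal src tgt I -> linearized_semigroup_ideal src tgt I.
Proof.
move=> uniq_paths I ideal_I.
exists (fun w => is_path src tgt w /\ I (kq_basis w)).
split; first by move=> w [].
split.
  move=> w a b [Pw Iw] Pa Pb aw wb; split.
    apply: is_path_pconcat; rewrite ?path_end_pconcat //.
    exact: is_path_pconcat.
  exact: (kq_ideal_basis_pconcat ideal_I uniq_paths Iw).
move=> f; split => [If | [KQf f_basis]]; last first.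
  by apply: (kq_ideal_span ideal_I) => // p /f_basis [].
have KQf := ideal_I.1 f If; split => // p fp.
by split; [exact: KQf.1 | exact: (kq_ideal_basis ideal_I uniq_paths If)].
Qed.
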